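(* Let $V=\bigoplus_{i=1}^m B_i$ be a near vector space over a commutative $F$ with finite block type (blocks $B_1,\dots,B_m$). Then every ultrapower $\prod V/\mathcal U$ of $V$ (as an $\mathcal L_{Fnvs}$-structure) is a near vector space over $F$.
   Context: An F-group is a pair $(V,F)$ where $(V,+)$ is a group and $F$ is a set of endomorphisms of $V$ such that: the maps $0,1,-1$ lie in $F$; $F\setminus\{0\}$ is a subgroup of $\mathrm{Aut}(V,+)$ under composition; and if $\alpha x=\beta x$ with $\alpha,\beta\in F$, $x\in V$ then $\alpha=\beta$ or $x=0$. The quasi-kernel $Q(V)$ is the set of $u\in V$ such that for all $\alpha,\beta\in F$ there is $\gamma\in F$ with $\alpha u+\beta u=\gamma u$. $(V,F)$ is a near vector space if $Q(V)$ generates $(V,+)$; commutative means $\alpha(\beta v)=\beta(\alpha v)$. The blocks of $V$ are the summands in André's decomposition of $V$ into maximal regular near vector subspaces (regular: any two nonzero quasi-kernel elements $u,v$ are compatible, i.e. $u+\lambda v\in Q(V)$ for some $\lambda\in F\setminus\{0\}$), each nonzero element of $Q(V)$ lying in exactly one block. Finite block type means finitely many blocks. The language $\mathcal L_{Fnvs}=\{+,0,(\lambda)_{\lambda\in F}\}$ has a unary function symbol for each $\lambda\in F$ interpreted as its action. *)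

From Stdlib Require Import List ClassicalEpsilon.
Set Implicit Arguments.

Section NVS.
Variables (T S : Type) (D : T -> Prop)
          (add : T -> T -> T) (zero : T) (act : S -> T -> T).

Definition eqD (f g : T -> T) : Prop := forall x, D x -> f x = g x.

Definition nz (s : S) : Prop := ~ eqD (act s) (fun _ => zero).

Definition is_group : Prop :=
  D zero /\
  (forall x y, D x -> D y -> D (add x y)) /\
  (forall x y z, D x -> D y -> D z -> add x (add y z) = add (add x y) z) /\
  (forall x, D x -> add zero x = x /\ add x zero = x) /\
  (forall x, D x -> exists y, D y /\ add x y = zero /\ add y x = zero).

Definition F_group : Prop :=
  is_group /\
  (forall s x, D x -> D (act s x)) /\
  (forall s x y, D x -> D y -> act s (add x y) = add (act s x) (act s y)) /\
  (exists s0, eqD (act s0) (fun _ => zero)) /\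
  (exists s1, eqD (act s1) (fun x => x)) /\
  (exists sm, forall x, D x -> add x (act sm x) = zero /\ add (act sm x) x = zero) /\
  (* F \ {0} is a subgroup of Aut(D,+) under composition *)
  (forall s, nz s ->
     (forall x y, D x -> D y -> act s x = act s y -> x = y) /\
     (forall y, D y -> exists x, D x /\ act s x = y)) /\
  (exists s1, nz s1 /\ eqD (act s1) (fun x => x)) /\
  (forall s t, nz s -> nz t ->
     exists u, nz u /\ eqD (act u) (fun x => act s (act t x))) /\
  (forall s, nz s -> exists u, nz u /\
     eqD (fun x => act u (act s x)) (fun x => x) /\
     eqD (fun x => act s (act u x)) (fun x => x)) /\
  (forall s t x, D x -> act s x = act t x -> eqD (act s) (act t) \/ x = zero).

Definition quasi_kernel (u : T) : Prop :=
  D u /\ forall s t, exists g, add (act s u) (act t u) = act g u.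

Inductive gen (P : T -> Prop) : T -> Prop :=
| gen_base x : P x -> gen P x
| gen_zero : gen P zero
| gen_add x y : gen P x -> gen P y -> gen P (add x y)
| gen_inv x y : gen P x -> D y -> add x y = zero -> gen P y.

Definition near_vector_space : Prop :=
  F_group /\ forall x, D x -> gen quasi_kernel x.

Definition regular : Prop :=
  forall u v, quasi_kernel u -> quasi_kernel v -> u <> zero -> v <> zero ->
    exists l, nz l /\ quasi_kernel (add u (act l v)).

Definition commutative_F : Prop :=
  forall s t x, D x -> act s (act t x) = act t (act s x).

End NVS.

Definition regular_subspace (V S : Type) (add : V -> V -> V) (zero : V)
  (act : S -> V -> V) (W : V -> Prop) : Prop :=
  near_vector_space W add zero act /\ regular W add zero act.

Definition block (V S : Type) (add : V -> V -> V) (zero : V)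
  (act : S -> V -> V) (W : V -> Prop) : Prop :=
  regular_subspace add zero act W /\
  forall W', regular_subspace add zero act W' ->
    (forall x, W x -> W' x) -> forall x, W' x -> W x.

Definition finite_block_type (V S : Type) (add : V -> V -> V) (zero : V)
  (act : S -> V -> V) : Prop :=
  exists l : list (V -> Prop),
    forall W, block add zero act W ->
      exists W', In W' l /\ forall x, W x <-> W' x.

Definition ultrafilter (I : Type) (U : (I -> Prop) -> Prop) : Prop :=
  U (fun _ => True) /\ ~ U (fun _ => False) /\
  (forall A B : I -> Prop, U A -> (forall i, A i -> B i) -> U B) /\
  (forall A B : I -> Prop, U A -> U B -> U (fun i => A i /\ B i)) /\
  (forall A : I -> Prop, U A \/ U (fun i => ~ A i)).

(* ultrapower V^I / U as a genuine quotient type (set of equivalence classes) *)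
Section Ultrapower.
Variables (I V S : Type) (U : (I -> Prop) -> Prop).

Definition ueq (f g : I -> V) : Prop := U (fun i => f i = g i).

Definition UP : Type := { P : (I -> V) -> Prop | exists f, P = ueq f }.

Definition UPclass (f : I -> V) : UP :=
  exist _ (ueq f) (ex_intro _ f eq_refl).

Definition UPrep (a : UP) : I -> V :=
  proj1_sig (constructive_indefinite_description _ (proj2_sig a)).

Definition UPadd (add : V -> V -> V) (a b : UP) : UP :=
  UPclass (fun i => add (UPrep a i) (UPrep b i)).

Definition UPzero (zero : V) : UP := UPclass (fun _ => zero).

Definition UPact (act : S -> V -> V) (s : S) (a : UP) : UP :=
  UPclass (fun i => act s (UPrep a i)).

End Ultrapower.

From Stdlib Require Import List Classical ClassicalEpsilon FunctionalExtensionality PropExtensionality ProofIrrelevance.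

(* For commutative F, call [tau] the type of a quasi-kernel element u when [a u + b u = tau a b u]
   for all scalars a, b.  Two nonzero compatible elements have the same type (up to the action),
   so the elements of a given type form a maximal regular subspace, i.e. a block.  Finite block
   type thus yields finitely many types tau_1, ..., tau_m with every element of V a sum
   y_1 + ... + y_m, y_k of type tau_k.  In an ultrapower, a class whose coordinates all have type
   tau_k lies in the quasi-kernel with the uniform witness tau_k a b, so decomposing
   coordinatewise writes every class as a sum of m quasi-kernel elements; the F-group axioms
   transfer coordinatewise. *)

Set Implicit Arguments.
Unset Strict Implicit.

Section UltrapowerClasses.
Variables (Ix V : Type) (U : (Ix -> Prop) -> Prop).
Hypothesis HU : ultrafilter U.
Implicit Types (f g h : Ix -> V) (A B : Ix -> Prop).

Lemma ultra_mono A B : U A -> (forall i, A i -> B i) -> U B.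
Proof. destruct HU as (_ & _ & Hmono & _). apply Hmono. Qed.

Lemma ultra_and A B : U A -> U B -> U (fun i => A i /\ B i).
Proof. destruct HU as (_ & _ & _ & Hand & _). apply Hand. Qed.

Lemma ultra_all A : (forall i, A i) -> U A.
Proof. destruct HU as (Htop & _). intro HA. apply (ultra_mono Htop). auto. Qed.

Lemma ultra_nonempty A : U A -> exists i, A i.
Proof.
  destruct HU as (_ & Hbot & _). intro HA. apply NNPP. intro Hno. apply Hbot.
  apply (ultra_mono HA). intros i Hi. apply Hno. now exists i.
Qed.

Lemma ultra_em A : U A \/ U (fun i => ~ A i).
Proof. destruct HU as (_ & _ & _ & _ & Hem). apply Hem. Qed.

Lemma ueq_trans f g h : ueq U f g -> ueq U g h -> ueq U f h.
Proof. intros Hfg Hgh. apply (ultra_mono (ultra_and Hfg Hgh)). intros i [-> ->]. easy. Qed.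

Lemma ueq_sym f g : ueq U f g -> ueq U g f.
Proof. intro Hfg. apply (ultra_mono Hfg). easy. Qed.

Notation cls := (UPclass U).

Lemma UPclass_eq f g : ueq U f g -> cls f = cls g.
Proof.
  intro Hfg. unfold UPclass. apply eq_exist_uncurried.
  assert (Eq : ueq U f = ueq U g).
  { apply functional_extensionality. intro h. apply propositional_extensionality.
    split; apply ueq_trans; [now apply ueq_sym | exact Hfg]. }
  exists Eq. apply proof_irrelevance.
Qed.

Lemma UPclass_inj f g : cls f = cls g -> ueq U f g.
Proof.
  intro E. apply (f_equal (fun a => proj1_sig a g)) in E. simpl in E.
  rewrite E. now apply ultra_all.
Qed.

Lemma UPrepK (a : UP V U) : cls (UPrep a) = a.
Proof.
  destruct a as [P HP]. unfold UPrep, UPclass. simpl.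
  destruct (constructive_indefinite_description _ HP) as [g ->]. simpl.
  f_equal. apply proof_irrelevance.
Qed.

Lemma UPclass_surj (a : UP V U) : exists f, a = cls f.
Proof. exists (UPrep a). symmetry. apply UPrepK. Qed.

Lemma UPrep_class f : ueq U (UPrep (cls f)) f.
Proof. apply UPclass_inj. apply UPrepK. Qed.

Lemma UPclass_ext f g : (forall i, f i = g i) -> cls f = cls g.
Proof. intro E. apply UPclass_eq. now apply ultra_all. Qed.

Lemma UPadd_class (add : V -> V -> V) f g :
  UPadd add (cls f) (cls g) = cls (fun i => add (f i) (g i)).
Proof.
  apply UPclass_eq. apply (ultra_mono (ultra_and (UPrep_class f) (UPrep_class g))).
  intros i [-> ->]. easy.
Qed.

Lemma UPact_class (S : Type) (act : S -> V -> V) s f :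
  UPact act s (cls f) = cls (fun i => act s (f i)).
Proof.
  apply UPclass_eq. apply (ultra_mono (UPrep_class f)). intros i ->. easy.
Qed.

End UltrapowerClasses.

Section FGroupTheory.
Variables (V S : Type) (add : V -> V -> V) (zero : V) (act : S -> V -> V).
Hypothesis HF : F_group (fun _ : V => True) add zero act.

Notation full := (fun _ : V => True).
Notation nzV := (nz full zero act).

Lemma addA x y z : add x (add y z) = add (add x y) z.
Proof. destruct HF as ((_ & _ & Hassoc & _) & _). now apply Hassoc. Qed.

Lemma add0l x : add zero x = x.
Proof. destruct HF as ((_ & _ & _ & Hunit & _) & _). now apply Hunit. Qed.

Lemma add0r x : add x zero = x.
Proof. destruct HF as ((_ & _ & _ & Hunit & _) & _). now apply Hunit. Qed.

Lemma act_add s x y : act s (add x y) = add (act s x) (act s y).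
Proof. destruct HF as (_ & _ & Hhom & _). now apply Hhom. Qed.

Lemma act_zero_scalar_ex : exists s0, forall x, act s0 x = zero.
Proof. destruct HF as (_ & _ & _ & [s0 H0] & _). exists s0. intro x. now apply H0. Qed.

Lemma act_one_ex : exists s1, nzV s1 /\ forall x, act s1 x = x.
Proof.
  destruct HF as (_ & _ & _ & _ & _ & _ & _ & [s1 [Hs1 H1]] & _).
  exists s1. split; [exact Hs1 | intro x; now apply H1].
Qed.

Lemma act_minus_one_ex :
  exists m, forall x, add x (act m x) = zero /\ add (act m x) x = zero.
Proof. destruct HF as (_ & _ & _ & _ & _ & [m Hm] & _). exists m. intro x. now apply Hm. Qed.

Lemma act_comp_nz s t : nzV s -> nzV t ->
  exists r, nzV r /\ forall x, act r x = act s (act t x).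
Proof.
  destruct HF as (_ & _ & _ & _ & _ & _ & _ & _ & Hcomp & _). intros Hs Ht.
  destruct (Hcomp s t Hs Ht) as [r [Hr E]]. exists r. split; [exact Hr | intro x; now apply E].
Qed.

Lemma act_inv_nz s : nzV s ->
  exists r, nzV r /\ forall x, act r (act s x) = x /\ act s (act r x) = x.
Proof.
  destruct HF as (_ & _ & _ & _ & _ & _ & _ & _ & _ & Hinv & _). intro Hs.
  destruct (Hinv s Hs) as [r [Hr [E1 E2]]]. exists r.
  split; [exact Hr | intro x; split; [apply E1 | apply E2]; exact I].
Qed.

Lemma act_inj s x y : nzV s -> act s x = act s y -> x = y.
Proof.
  destruct HF as (_ & _ & _ & _ & _ & _ & Hbij & _). intro Hs. now apply Hbij.
Qed.

Lemma act_fpf s t x : act s x = act t x -> x = zero \/ forall y, act s y = act t y.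
Proof.
  destruct HF as (_ & _ & _ & _ & _ & _ & _ & _ & _ & _ & Hfpf). intro E.
  destruct (Hfpf s t x I E) as [Hst | Hx]; [right | now left].
  intro y. now apply Hst.
Qed.

Definition minus_one : S :=
  proj1_sig (constructive_indefinite_description _ act_minus_one_ex).

Definition opp (x : V) : V := act minus_one x.

Lemma addN x : add x (opp x) = zero.
Proof.
  unfold opp, minus_one. destruct (constructive_indefinite_description _ _) as [m Hm].
  apply Hm.
Qed.

Lemma addNl x : add (opp x) x = zero.
Proof.
  unfold opp, minus_one. destruct (constructive_indefinite_description _ _) as [m Hm].
  apply Hm.
Qed.

Lemma add_cancel_l x y z : add x y = add x z -> y = z.
Proof.
  intro E. now rewrite <- (add0l y), <- (add0l z), <- (addNl x), <- !addA, E.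
Qed.

Lemma opp_unique x y : add x y = zero -> y = opp x.
Proof. intro E. apply (add_cancel_l (x := x)). now rewrite E, addN. Qed.

Lemma oppK x : opp (opp x) = x.
Proof. symmetry. apply opp_unique. apply addNl. Qed.

Lemma subr0_eq x y : add x (opp y) = zero -> x = y.
Proof. intro E. rewrite <- (oppK x), <- (opp_unique E). apply oppK. Qed.

Lemma act0 s : act s zero = zero.
Proof. apply (add_cancel_l (x := act s zero)). now rewrite <- act_add, !add0r. Qed.

(* The scalar -1 is an endomorphism, so negation is additive; this forces commutativity. *)
Lemma addC x y : add x y = add y x.
Proof.
  assert (Hopp : forall a b, add (opp a) (opp b) = add (opp b) (opp a)).
  { intros a b. unfold opp at 1 2. rewrite <- act_add. symmetry. apply opp_unique.
    now rewrite <- addA, (addA b), addN, add0l, addN. }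
  rewrite <- (oppK x), <- (oppK y). apply Hopp.
Qed.

Lemma addACA p q r s : add (add p q) (add r s) = add (add p r) (add q s).
Proof. rewrite <- !addA. f_equal. rewrite !addA. f_equal. apply addC. Qed.

Lemma act_zero_not_nz s x : ~ nzV s -> act s x = zero.
Proof. intro Hs. apply NNPP in Hs. now apply Hs. Qed.

Lemma act_nz_neq0 s x : nzV s -> x <> zero -> act s x <> zero.
Proof. intros Hs Hx E. apply Hx. apply (act_inj Hs). now rewrite act0. Qed.

Lemma act_comp s t : exists r, forall x, act r x = act s (act t x).
Proof.
  destruct (classic (nzV s)) as [Hs | Hs]; [destruct (classic (nzV t)) as [Ht | Ht] |].
  - destruct (act_comp_nz Hs Ht) as [r [_ Hr]]. now exists r.
  - exists t. intro x. now rewrite (act_zero_not_nz _ Ht), act0.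
  - exists s. intro x. now rewrite !(act_zero_not_nz _ Hs).
Qed.

Lemma act_agree s t x : act s x = act t x -> x <> zero -> forall y, act s y = act t y.
Proof. intros E Hx. now destruct (act_fpf E). Qed.

Lemma act_proportional r1 r2 u v : act r1 u = act r2 v -> act r1 u <> zero ->
  exists c, u = act c v.
Proof.
  intros E Hne.
  assert (Hr1 : nzV r1) by (intro H; apply Hne, H; exact I).
  destruct (act_inv_nz Hr1) as [k [_ Hk]]. destruct (act_comp k r2) as [c Hc].
  exists c. rewrite Hc, <- E. symmetry. apply Hk.
Qed.

Lemma nz_full (W : V -> Prop) s : nz W zero act s -> nzV s.
Proof. intros HW Hs. apply HW. intros x _. now apply Hs. Qed.

Lemma nz_restrict (W : V -> Prop) s u : W u -> u <> zero -> nzV s -> nz W zero act s.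
Proof. intros Hu Hne Hs HW. apply (act_nz_neq0 Hs Hne). now apply HW. Qed.

(* The nonzero element [u] is needed because [nz W] only tests the scalars on [W]. *)
Lemma F_group_restrict (W : V -> Prop) u :
  W zero -> (forall x y, W x -> W y -> W (add x y)) -> (forall s x, W x -> W (act s x)) ->
  W u -> u <> zero -> F_group W add zero act.
Proof.
  intros W0 WD WZ Wu Hu.
  assert (HN : forall s, nz W zero act s <-> nzV s).
  { intro s. split; [apply nz_full | apply (nz_restrict Wu Hu)]. }
  split; [| split; [| split; [| split; [| split; [| split; [| split; [| split; [| split; [| split]]]]]]]]].
  - split; [exact W0 |]. split; [exact WD |].
    split; [intros; apply addA |]. split; [intros; split; [apply add0l | apply add0r] |].
    intros x Wx. exists (opp x). split; [now apply WZ |]. split; [apply addN | apply addNl].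
  - exact WZ.
  - intros; apply act_add.
  - destruct act_zero_scalar_ex as [s0 H0]. exists s0. intros x _. apply H0.
  - destruct act_one_ex as [s1 [_ H1]]. exists s1. intros x _. apply H1.
  - exists minus_one. intros x _. split; [apply addN | apply addNl].
  - intros s Hs. apply HN in Hs. split.
    + intros x y _ _. now apply act_inj.
    + intros y Wy. destruct (act_inv_nz Hs) as [r [_ Hr]].
      exists (act r y). split; [now apply WZ | apply Hr].
  - destruct act_one_ex as [s1 [Hs1 H1]]. exists s1. split; [now apply HN |]. intros x _. apply H1.
  - intros s t Hs Ht. apply HN in Hs, Ht. destruct (act_comp_nz Hs Ht) as [r [Hr E]].
    exists r. split; [now apply HN |]. intros x _. apply E.
  - intros s Hs. apply HN in Hs. destruct (act_inv_nz Hs) as [r [Hr E]].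
    exists r. split; [now apply HN |]. split; intros x _; apply E.
  - intros s t x _ E. destruct (act_fpf E) as [Hx | Hst]; [now right | left].
    intros y _. apply Hst.
Qed.

Section Types.
Hypothesis Hcomm : commutative_F full act.

Definition typed (tau : S -> S -> S) (x : V) : Prop :=
  forall a b, add (act a x) (act b x) = act (tau a b) x.

Lemma typed0 tau : typed tau zero.
Proof. intros a b. now rewrite !act0, add0l. Qed.

Lemma typedD tau x y : typed tau x -> typed tau y -> typed tau (add x y).
Proof. intros Hx Hy a b. now rewrite !act_add, addACA, Hx, Hy. Qed.

Lemma typed_act tau c x : typed tau x -> typed tau (act c x).
Proof.
  intros Hx a b. rewrite !(Hcomm a c), !(Hcomm b c), <- act_add, Hx; try exact I.
  now apply Hcomm.
Qed.

Lemma typed_sub tau x s t : typed tau x -> exists r, add (act s x) (opp (act t x)) = act r x.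
Proof.
  intro Hx. destruct (act_comp minus_one t) as [r Hr].
  exists (tau s r). unfold opp. now rewrite <- Hr.
Qed.

Lemma quasi_kernel_typed (W : V -> Prop) u :
  quasi_kernel W add act u -> exists tau, typed tau u.
Proof.
  intros [_ Hu].
  exists (fun a b => proj1_sig (constructive_indefinite_description _ (Hu a b))).
  intros a b. now destruct (constructive_indefinite_description _ (Hu a b)).
Qed.

Lemma typed_quasi_kernel (W : V -> Prop) tau u :
  W u -> typed tau u -> quasi_kernel W add act u.
Proof. intros Wu Hu. split; [exact Wu |]. intros a b. now exists (tau a b). Qed.

(* Compatible elements have the same type: from [a w + b w = g w] with [w = u + v] one gets
   [(tau a b - g) u = (g - sig a b) v]; either both sides vanish, or [u] is a multiple of [v]. *)
Lemma compatible_types_agree (W : V -> Prop) tau sig u v :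
  u <> zero -> v <> zero -> typed tau u -> typed sig v ->
  quasi_kernel W add act (add u v) -> forall a b x, act (tau a b) x = act (sig a b) x.
Proof.
  intros Hu Hv Pu Pv [_ Hw] a b.
  destruct (Hw a b) as [g Eg].
  rewrite !act_add, addACA, Pu, Pv in Eg.
  destruct (typed_sub (tau a b) g Pu) as [r1 E1].
  destruct (typed_sub g (sig a b) Pv) as [r2 E2].
  assert (Er : act r1 u = act r2 v).
  { rewrite <- E1, <- E2, <- (add0r (add (act (tau a b) u) _)), <- (addN (act (sig a b) v)).
    now rewrite addACA, Eg, addACA, addN, add0l. }
  destruct (classic (act r1 u = zero)) as [Z | Z].
  - rewrite Z in E1. rewrite <- Er, Z in E2.
    apply subr0_eq in E1. apply subr0_eq in E2.
    intro x. rewrite (act_agree E1 Hu). exact (act_agree E2 Hv x).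
  - destruct (act_proportional Er Z) as [c ->].
    apply (act_agree (x := act c v)); [| exact Hu].
    now rewrite <- Pu, (typed_act c Pv).
Qed.

Lemma typed_block tau u0 : u0 <> zero -> typed tau u0 -> block add zero act (typed tau).
Proof.
  intros Hu0 Pu0.
  assert (HN : forall s, nzV s -> nz (typed tau) zero act s) by (intro; apply (nz_restrict Pu0 Hu0)).
  split; [split; [split |] |].
  - apply (F_group_restrict (u := u0)); auto using typed0, typedD.
    intros s x; apply typed_act.
  - intros x Hx. apply gen_base. now apply (typed_quasi_kernel (tau := tau)).
  - intros u v [Pu _] [Pv _] _ _. destruct act_one_ex as [s1 [Hs1 H1]].
    exists s1. split; [now apply HN |]. apply (typed_quasi_kernel (tau := tau)); rewrite H1; now apply typedD.
  - intros W [[_ Hgen] Hreg] Hsub x Wx.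
    specialize (Hgen x Wx). clear Wx.
    induction Hgen as [y Qy | | y z _ IHy _ IHz | y z _ IHy _ E].
    + destruct (classic (y = zero)) as [-> | Hy]; [apply typed0 |].
      destruct (Hreg u0 y (typed_quasi_kernel (Hsub u0 Pu0) Pu0) Qy Hu0 Hy) as [l [Hl Qw]].
      destruct (quasi_kernel_typed Qy) as [sig Py].
      intros a b. rewrite Py.
      symmetry. apply (compatible_types_agree Hu0 (act_nz_neq0 (nz_full Hl) Hy) Pu0 (typed_act l Py) Qw).
    + apply typed0.
    + now apply typedD.
    + rewrite (opp_unique E). now apply typed_act.
Qed.

Lemma list_witnesses (A B : Type) (P : A -> B -> Prop) (l : list A) :
  exists lb, forall a, In a l -> (exists b, P a b) -> exists b, In b lb /\ P a b.
Proof.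
  induction l as [| a l [lb IH]]; [now exists nil |].
  destruct (classic (exists b, P a b)) as [[b Hb] | Hno].
  - exists (b :: lb). intros a' [<- | Ha'] Hex; [now exists b; split; [left |] |].
    destruct (IH a' Ha' Hex) as [b' [Hb' Pb']]. exists b'. split; [now right | exact Pb'].
  - exists lb. intros a' [<- | Ha'] Hex; [contradiction | now apply IH].
Qed.

(* Every [typed tau] with a nonzero element is a block, so finitely many types suffice. *)
Lemma finitely_many_types : finite_block_type add zero act ->
  exists ts, forall u, quasi_kernel full add act u -> u <> zero ->
    exists t, In t ts /\ typed t u.
Proof.
  intros [l Hl].
  destruct (list_witnesses (fun W t => forall x, W x -> typed t x) l) as [ts Hts].
  exists ts. intros u Qu Hu.
  destruct (quasi_kernel_typed Qu) as [tau Pu].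
  destruct (Hl _ (typed_block Hu Pu)) as [W [HW EW]].
  destruct (Hts W HW) as [t [Ht Wt]].
  - exists tau. intros x Wx. now apply EW.
  - exists t. split; [exact Ht | apply Wt, EW, Pu].
Qed.

Fixpoint typed_sum (ts : list (S -> S -> S)) (x : V) : Prop :=
  match ts with
  | nil => x = zero
  | t :: ts' => exists y z, typed t y /\ typed_sum ts' z /\ x = add y z
  end.

Lemma typed_sum0 ts : typed_sum ts zero.
Proof.
  induction ts as [| t ts IH]; [reflexivity |].
  exists zero, zero. split; [apply typed0 |]. split; [exact IH | now rewrite add0l].
Qed.

Lemma typed_sumD ts x1 x2 : typed_sum ts x1 -> typed_sum ts x2 -> typed_sum ts (add x1 x2).
Proof.
  revert x1 x2. induction ts as [| t ts IH]; intros x1 x2; simpl.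
  - intros -> ->. apply add0l.
  - intros (y1 & z1 & P1 & S1 & ->) (y2 & z2 & P2 & S2 & ->).
    exists (add y1 y2), (add z1 z2). split; [now apply typedD |].
    split; [now apply IH | apply addACA].
Qed.

Lemma typed_sum_act ts c x : typed_sum ts x -> typed_sum ts (act c x).
Proof.
  revert x. induction ts as [| t ts IH]; intro x; simpl.
  - intros ->. apply act0.
  - intros (y & z & Py & Sz & ->). exists (act c y), (act c z).
    split; [now apply typed_act |]. split; [now apply IH | apply act_add].
Qed.

Lemma typed_sum_In ts t y : In t ts -> typed t y -> typed_sum ts y.
Proof.
  induction ts as [| t' ts IH]; [intros [] |].
  intros [<- | Ht] Py; simpl.
  - exists y, zero. split; [exact Py |]. split; [apply typed_sum0 | now rewrite add0r].
  - exists zero, y. split; [apply typed0 |]. split; [now apply IH | now rewrite add0l].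
Qed.

Lemma typed_sum_all : near_vector_space full add zero act -> finite_block_type add zero act ->
  exists ts, forall x, typed_sum ts x.
Proof.
  intros [_ Hgen] Hfb. destruct (finitely_many_types Hfb) as [ts Hts].
  exists ts. intro x. induction (Hgen x I) as [y Qy | | y z _ IHy _ IHz | y z _ IHy _ E].
  - destruct (classic (y = zero)) as [-> | Hy]; [apply typed_sum0 |].
    destruct (Hts y Qy Hy) as [t [Ht Py]]. exact (typed_sum_In Ht Py).
  - apply typed_sum0.
  - now apply typed_sumD.
  - rewrite (opp_unique E). now apply typed_sum_act.
Qed.

Section Ultrapower.
Variables (Ix : Type) (U : (Ix -> Prop) -> Prop).
Hypothesis HU : ultrafilter U.

Notation cls := (UPclass U).
Notation fullU := (fun _ : UP V U => True).
Notation nzU := (nz fullU (UPzero U zero) (UPact act)).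

Lemma nz_ultrapower s : nzU s <-> nzV s.
Proof.
  split; intros Hs Hzero; apply Hs.
  - intros a _. destruct (UPclass_surj a) as [f ->]. rewrite UPact_class; [| exact HU].
    apply (UPclass_ext HU). intro i. now apply Hzero.
  - intros x _. apply NNPP. intro Hx.
    specialize (Hzero (cls (fun _ => x)) I). rewrite UPact_class in Hzero; [| exact HU].
    destruct (ultra_nonempty HU (UPclass_inj HU Hzero)) as [i Hi]. exact (Hx Hi).
Qed.

Lemma is_group_ultrapower : is_group fullU (UPadd add) (UPzero U zero).
Proof.
  split; [exact I |]. split; [intros; exact I |]. split; [| split].
  - intros a b c _ _ _.
    destruct (UPclass_surj a) as [f ->], (UPclass_surj b) as [g ->], (UPclass_surj c) as [h ->].
    rewrite !(UPadd_class HU). apply (UPclass_ext HU). intro i. apply addA.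
  - intros a _. destruct (UPclass_surj a) as [f ->]. unfold UPzero. rewrite !(UPadd_class HU).
    split; apply (UPclass_ext HU); intro i; [apply add0l | apply add0r].
  - intros a _. destruct (UPclass_surj a) as [f ->]. exists (cls (fun i => opp (f i))).
    split; [exact I |]. unfold UPzero. rewrite !(UPadd_class HU).
    split; apply (UPclass_ext HU); intro i; [apply addN | apply addNl].
Qed.

(* Every axiom transfers coordinatewise; for fixed-point-freeness the ultrafilter supplies an
   index where the representative is nonzero and the two scalars agree on it. *)
Lemma F_group_ultrapower : F_group fullU (UPadd add) (UPzero U zero) (UPact act).
Proof.
  assert (Hext : forall s t, (forall x, act s x = act t x) ->
            forall a : UP V U, UPact act s a = UPact act t a).
  { intros s t E a. destruct (UPclass_surj a) as [f ->]. rewrite !(UPact_class HU).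
    apply (UPclass_ext HU). intro i. apply E. }
  split; [exact is_group_ultrapower |].
  split; [intros; exact I |]. split; [| split; [| split; [| split; [| split; [| split; [| split; [| split]]]]]]].
  - intros s a b _ _. destruct (UPclass_surj a) as [f ->], (UPclass_surj b) as [g ->].
    rewrite !(UPadd_class HU), !(UPact_class HU), (UPadd_class HU).
    apply (UPclass_ext HU). intro i. apply act_add.
  - destruct act_zero_scalar_ex as [s0 H0]. exists s0. intros a _.
    destruct (UPclass_surj a) as [f ->]. rewrite (UPact_class HU).
    apply (UPclass_ext HU). intro i. apply H0.
  - destruct act_one_ex as [s1 [_ H1]]. exists s1. intros a _.
    destruct (UPclass_surj a) as [f ->]. rewrite (UPact_class HU).
    apply (UPclass_ext HU). intro i. apply H1.
  - exists minus_one. intros a _. destruct (UPclass_surj a) as [f ->].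
    rewrite (UPact_class HU). unfold UPzero. rewrite !(UPadd_class HU).
    split; apply (UPclass_ext HU); intro i; [apply addN | apply addNl].
  - intros s Hs. apply nz_ultrapower in Hs. split.
    + intros a b _ _. destruct (UPclass_surj a) as [f ->], (UPclass_surj b) as [g ->].
      rewrite !(UPact_class HU). intro E. apply (UPclass_eq HU).
      apply (ultra_mono HU (UPclass_inj HU E)). intros i. now apply act_inj.
    + intros b _. destruct (UPclass_surj b) as [g ->]. destruct (act_inv_nz Hs) as [r [_ Hr]].
      exists (cls (fun i => act r (g i))). split; [exact I |]. rewrite (UPact_class HU).
      apply (UPclass_ext HU). intro i. apply Hr.
  - destruct act_one_ex as [s1 [Hs1 H1]]. exists s1. split; [now apply nz_ultrapower |].
    intros a _. destruct (UPclass_surj a) as [f ->]. rewrite (UPact_class HU).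
    apply (UPclass_ext HU). intro i. apply H1.
  - intros s t Hs Ht. apply nz_ultrapower in Hs, Ht. destruct (act_comp_nz Hs Ht) as [r [Hr E]].
    exists r. split; [now apply nz_ultrapower |]. intros a _.
    destruct (UPclass_surj a) as [f ->]. rewrite !(UPact_class HU).
    apply (UPclass_ext HU). intro i. apply E.
  - intros s Hs. apply nz_ultrapower in Hs. destruct (act_inv_nz Hs) as [r [Hr E]].
    exists r. split; [now apply nz_ultrapower |].
    split; intros a _; destruct (UPclass_surj a) as [f ->]; rewrite !(UPact_class HU);
      apply (UPclass_ext HU); intro i; apply E.
  - intros s t a _ E. destruct (UPclass_surj a) as [f ->]. rewrite !(UPact_class HU) in E.
    destruct (ultra_em HU (fun i => f i = zero)) as [Z | NZ].
    + right. now apply (UPclass_eq HU).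
    + left. destruct (ultra_nonempty HU (ultra_and HU (UPclass_inj HU E) NZ)) as [i [Ei Ni]].
      intros b _. apply Hext. intro x. exact (act_agree Ei Ni x).
Qed.

Lemma typed_class_quasi_kernel t (f : Ix -> V) : (forall i, typed t (f i)) ->
  quasi_kernel fullU (UPadd add) (UPact act) (cls f).
Proof.
  intro Hf. split; [exact I |]. intros a b. exists (t a b).
  rewrite !(UPact_class HU), (UPadd_class HU). apply (UPclass_ext HU). intro i. apply Hf.
Qed.

(* The list [ts] does not depend on the index, so coordinatewise decompositions of the [f i]
   assemble into a finite sum of quasi-kernel classes. *)
Lemma typed_sum_class_gen ts (f : Ix -> V) : (forall i, typed_sum ts (f i)) ->
  gen fullU (UPadd add) (UPzero U zero) (quasi_kernel fullU (UPadd add) (UPact act)) (cls f).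
Proof.
  revert f. induction ts as [| t ts IH]; intros f Hf; simpl in Hf.
  - replace (cls f) with (UPzero U zero); [apply gen_zero |].
    apply (UPclass_ext HU). intro i. now rewrite Hf.
  - destruct (choice (fun i (yz : V * V) =>
        typed t (fst yz) /\ typed_sum ts (snd yz) /\ f i = add (fst yz) (snd yz)))
      as [yz Hyz].
    { intro i. destruct (Hf i) as (y & z & H). now exists (y, z). }
    replace (cls f) with (UPadd add (cls (fun i => fst (yz i))) (cls (fun i => snd (yz i)))).
    + apply gen_add.
      * apply gen_base, (typed_class_quasi_kernel (t := t)). intro i. apply Hyz.
      * apply IH. intro i. apply Hyz.
    + rewrite (UPadd_class HU). apply (UPclass_ext HU). intro i. symmetry. apply Hyz.
Qed.

End Ultrapower.
End Types.
End FGroupTheory.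

Theorem mainTheorem13 (V S : Type) (add : V -> V -> V) (zero : V)
  (act : S -> V -> V) :
  near_vector_space (fun _ : V => True) add zero act ->
  commutative_F (fun _ : V => True) act ->
  finite_block_type add zero act ->
  forall (I : Type) (U : (I -> Prop) -> Prop),
    ultrafilter U ->
    near_vector_space (fun _ : @UP I V U => True)
      (@UPadd I V U add) (@UPzero I V U zero) (@UPact I V S U act).
Proof.
  intros Hnvs Hcomm Hfb Ix U HU.
  pose proof (proj1 Hnvs) as HF.
  split; [exact (F_group_ultrapower HF HU) |].
  destruct (typed_sum_all HF Hcomm Hnvs Hfb) as [ts Hts].
  intros a _. destruct (UPclass_surj a) as [f ->].
  apply (typed_sum_class_gen HU (ts := ts)). intro i. apply Hts.
Qed.
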